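(* Let $\Sigma$ be a topological Markov chain with shift $\sigma$ and $\mu$ a Gibbs measure on $\Sigma$ for a H\''older continuous potential (as in the context), and let $\varepsilon>0$. Then there exists a sequence of cylinders $\{C_n\}$, $C_n$ defined on an interval $\Lambda_n\subset\mathbb Z$, with $\sum_n\mu(C_n)=\infty$, such that the center of each $\Lambda_n$ lies in $[-\varepsilon|\Lambda_n|/2,\varepsilon|\Lambda_n|/2]$, and such that for $\mu$-a.e. $\underline\omega\in\Sigma$ there are only finitely many $n$ with $\sigma^n\underline\omega\in C_n$ (in particular $\{C_n\}$ is not a Borel-Cantelli sequence). The same holds with the centering condition replaced by: the left endpoint of each $\Lambda_n$ lies in $[0,\varepsilon|\Lambda_n|]$.
   Context: Let $M\ge2$ and $\mathbf A$ an $M\times M$ zero-one matrix with $\mathbf A^K$ entrywise positive for some $K\ge1$; $\Sigma=\{\underline\omega\in\{1,\dots,M\}^{\mathbb Z}:\mathbf A_{\omega_i\omega_{i+1}}=1\ \forall i\}$ with product topology and left shift $(\sigma\underline\omega)_i=\omega_{i+1}$; $\mu$ is the unique $\sigma$-invariant Gibbs measure of a H\''older continuous function on $\Sigma$. A cylinder defined on $\Lambda=[n^-,n^+]\subset\mathbb Z$ is $\{\underline\omega'\in\Sigma:\omega_i'=\omega_i,\ n^-\le i\le n^+\}$ for fixed symbols $\omega_i$; $|\Lambda|=n^+-n^-+1$, and the center of $\Lambda$ is $(n^-+n^+)/2$. A sequence of sets $\{A_n\}$ with $\sum\mu(A_n)=\infty$ is a Borel-Cantelli sequence if for $\mu$-a.e.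 $\underline\omega$ there are infinitely many $n$ with $\sigma^n\underline\omega\in A_n$. *)

From HB Require Import structures.
From mathcomp Require Import all_boot all_order all_algebra.
From mathcomp Require Import all_classical all_reals all_analysis.
Import Order.TTheory GRing.Theory Num.Theory.
Set Implicit Arguments. Unset Strict Implicit. Unset Printing Implicit Defensive.
Local Open Scope classical_set_scope.
Local Open Scope ring_scope.

(* Symbols: 'I_(m.+2), i.e. M = m+2 >= 2 symbols labelled 0..M-1.
   Two-sided sequences: int -> 'I_(m.+2). *)
Definition seqs (m : nat) := int -> 'I_(m.+2).
HB.instance Definition _ m := Choice.on (seqs m).
HB.instance Definition _ m := isPointed.Build (seqs m) (fun _ => ord0).

Definition coord_sets (m : nat) : set (set (seqs m)) :=
  [set B | exists (i : int) (k : 'I_(m.+2)), B = [set w | w i = k]].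

Definition Seqs (m : nat) := g_sigma_algebraType (@coord_sets m).

Definition sshift (m : nat) (w : Seqs m) : Seqs m := fun i => w (i + 1).

Definition zero_one (m : nat) (A : 'M[int]_(m.+2)) :=
  forall i j, A i j = 0 \/ A i j = 1.

Definition primitive_mx (m : nat) (A : 'M[int]_(m.+2)) :=
  exists K : nat, (0 < K)%N /\ forall i j, 0 < (A ^+ K) i j.

Definition TMC (m : nat) (A : 'M[int]_(m.+2)) : set (Seqs m) :=
  [set w | forall i : int, A (w i) (w (i + 1)) = 1].

Definition cylinder (m : nat) (A : 'M[int]_(m.+2)) (a b : int) (w : Seqs m)
  : set (Seqs m) :=
  [set w' | TMC A w' /\ forall i : int, a <= i <= b -> w' i = w i].

(* Hoelder continuity on Sigma_A (w.r.t. the standard metrics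
   d_theta(w,w') = theta^{min{|i| : w_i <> w'_i}}) *)
Definition holder (R : realType) (m : nat) (A : 'M[int]_(m.+2))
  (phi : Seqs m -> R) :=
  exists (C theta : R), 0 < C /\ 0 < theta < 1 /\
    forall (w w' : Seqs m) (k : nat), TMC A w -> TMC A w' ->
      (forall i : int, `|i| < k%:Z -> w i = w' i) ->
      `|phi w - phi w'| <= C * theta ^+ k.

Definition birkhoff (R : realType) (m : nat) (phi : Seqs m -> R) (n : nat)
  (w : Seqs m) : R :=
  \sum_(k < n) phi (iter k (@sshift m) w).

Definition gibbs_measure (R : realType) (m : nat) (A : 'M[int]_(m.+2))
  (phi : Seqs m -> R) (mu : probability (Seqs m) R) :=
  [/\ mu (TMC A) = 1%E,
      (forall B : set (Seqs m), measurable B ->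
         mu (@sshift m @^-1` B) = mu B) &
      exists (c1 c2 P : R), 0 < c1 /\ 0 < c2 /\
        forall (w : Seqs m) (n : nat), TMC A w -> (0 < n)%N ->
          let g := expR (- P * n%:R + birkhoff phi n w) in
          ((c1 * g)%:E <= mu (cylinder A 0 (n%:Z - 1) w) <= (c2 * g)%:E)%E].

From HB Require Import structures.
From mathcomp Require Import all_boot all_order all_algebra.
From mathcomp Require Import all_classical all_reals all_analysis.
From mathcomp Require Import zify lra.
Import Order.TTheory GRing.Theory Num.Theory.
Local Open Scope classical_set_scope.
Local Open Scope ring_scope.
Set Implicit Arguments. Unset Strict Implicit. Unset Printing Implicit Defensive.

(** For every k pick a cylinder Z_k of even length L_k with
    0 < mu(Z_k) = q_k <= 2^-(k+2) and 2^(k+3) <= eps L_k: by primitivity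
    every cylinder contains two disjoint longer cylinders, one of which has at
    most half its measure, and Gibbs cylinders have positive measure.  The
    indices n are cut into consecutive blocks; block k consists of r_k periods
    of length s_k = 2^(k+2), with r_k s_k q_k >= 1, so each block contributes
    at least 1 to the sum of the mu(C_n).  Within a period C_n is the translate
    of Z_k whose left endpoint a_n decreases by one as n increases by one, so
    a_n + n is constant on a period and, by shift invariance, the event
    "sigma^n x in C_n for some n of the period" is one fixed translate of Z_k.
    The event attached to block k thus has measure at most
    r_k q_k <= 1/s_k + q_k <= 2^-(k+1), and Borel-Cantelli concludes.  The
    offset within a period is less than s_k <= eps L_k / 2, whence both
    localisations of the windows. *)

Lemma bigcapZ_measurable d (T : measurableType d) (F : int -> set T) :
  (forall i, measurable (F i)) -> measurable (\bigcap_i F i).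
Proof.
move=> mF; rewrite -[X in measurable X]setCK setC_bigcap; apply: measurableC.
apply: countable_bigcupT_measurable; first exact: countableP.
by move=> i; apply: measurableC.
Qed.

Section cylinder_measurable.
Variables (m : nat) (A : 'M[int]_(m.+2)).

Lemma coord_measurable (i : int) (k : 'I_(m.+2)) :
  measurable [set w : Seqs m | w i = k].
Proof. by apply: sub_gen_smallest; exists i, k. Qed.

Lemma TMC_measurable : measurable (TMC A).
Proof.
have -> : TMC A = \bigcap_i \bigcup_(k in [set: 'I_(m.+2)])
    \bigcup_(l in [set l | A k l = 1])
      ([set w : Seqs m | w i = k] `&` [set w | w (i + 1) = l]).
  apply/seteqP; split => x /=.
    by move=> Hx i _; exists (x i) => //; exists (x (i + 1)) => //; exact: Hx.
  by move=> Hx i; have [k _ [l /= Hkl [-> ->]]] := Hx i I.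
apply: bigcapZ_measurable => i; apply: fin_bigcup_measurable => [|k _].
  exact: finite_finset.
apply: fin_bigcup_measurable => [|l _]; first exact: finite_finset.
by apply: measurableI; apply: coord_measurable.
Qed.

Lemma cylinder_measurable a b w : measurable (cylinder A a b w).
Proof.
have -> : cylinder A a b w = TMC A `&`
    \bigcap_i (if a <= i <= b then [set x : Seqs m | x i = w i] else setT).
  apply/seteqP; split => x /=.
    by move=> [H1 H2]; split => // i _; case: ifP => // /H2.
  by move=> [H1 H2]; split => // i Hi; have := H2 i I; rewrite Hi.
apply: measurableI; first exact: TMC_measurable.
by apply: bigcapZ_measurable => i; case: ifP => _;
  [exact: coord_measurable | exact: measurableT].
Qed.

End cylinder_measurable.

Section translation.
Variables (m : nat) (A : 'M[int]_(m.+2)).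

Lemma iter_sshift n (x : Seqs m) : iter n (@sshift m) x = (fun i => x (i + n%:Z)).
Proof.
elim: n => [|n IH] /=; first by apply/funext => i; rewrite addr0.
by rewrite IH; apply/funext => i; rewrite /sshift -addrA; congr (x (i + _)).
Qed.

Lemma TMC_translate (x : Seqs m) (c : int) :
  TMC A ((fun i => x (i + c)) : Seqs m) <-> TMC A x.
Proof.
split => H i /=; last by rewrite addrAC; apply: H.
by have := H (i - c); rewrite subrK addrAC subrK.
Qed.

Lemma cylinder_translate a b w (x : Seqs m) (c : int) :
  cylinder A a b w ((fun i => x (i + c)) : Seqs m) <->
  cylinder A (a + c) (b + c) (fun j => w (j - c)) x.
Proof.
rewrite /cylinder /=; split => -[H1 H2]; split.
- by move/TMC_translate: H1.
- by move=> i Hi; rewrite -(H2 (i - c)) ?subrK // lerBrDr lerBlDr.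
- exact/(TMC_translate x c).
- by move=> i Hi; rewrite H2 ?addrK // !lerD2r.
Qed.

Lemma cylinder_iter_sshift n a b w (x : Seqs m) :
  cylinder A a b w (iter n (@sshift m) x) <->
  cylinder A (a + n%:Z) (b + n%:Z) (fun j => w (j - n%:Z)) x.
Proof. by rewrite iter_sshift; exact: cylinder_translate. Qed.

Lemma cylinder_subset a b b' w :
  b <= b' -> cylinder A a b' w `<=` cylinder A a b w.
Proof.
move=> bb x [H1 H2]; split => // i /andP[ai ib]; apply: H2.
by rewrite ai (le_trans ib bb).
Qed.

End translation.


Section admissible_paths.
Variables (m : nat) (A : 'M[int]_(m.+2)).
Hypothesis A01 : zero_one A.

Lemma mx_power_gt0_path (k : nat) (i j : 'I_(m.+2)) : 0 < (A ^+ k) i j ->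
  exists p : nat -> 'I_(m.+2), [/\ p 0%N = i, p k = j &
    forall t, (t < k)%N -> A (p t) (p t.+1) = 1].
Proof.
elim: k i => [|k IH] i.
  rewrite expr0 mxE; case: eqP => [->|]; last by rewrite ltxx.
  by move=> _; exists (fun=> j).
rewrite exprS mxE => Hs.
have [l Hl] : exists l, 0 < A i l * (A ^+ k) l j.
  apply/not_existsP => H; move: Hs; apply/negP; rewrite -leNgt.
  by apply: sumr_le0 => l _; rewrite leNgt; apply/negP => /(H l).
have Ail : A i l = 1.
  by case: (A01 i l) => // H0; move: Hl; rewrite H0 mul0r ltxx.
move: Hl; rewrite Ail mul1r => /IH [q [q0 qk qt]].
exists (fun t => if t is t'.+1 then q t' else i); split => //.
by case=> [|t] /= Ht; [rewrite q0 | apply: qt].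
Qed.

Hypothesis A_prim : primitive_mx A.

Lemma exists_successor (i : 'I_(m.+2)) : exists l, A i l = 1.
Proof.
have [K [K0 HK]] := A_prim.
have [p [p0 _ pt]] := mx_power_gt0_path (HK i i).
by exists (p 1%N); rewrite -p0; apply: pt.
Qed.

Definition successor (i : 'I_(m.+2)) := projT1 (cid (exists_successor i)).

Lemma successorP i : A i (successor i) = 1.
Proof. exact: (projT2 (cid (exists_successor i))). Qed.

Definition splice (w : Seqs m) (N : int) (v : nat -> 'I_(m.+2)) : Seqs m :=
  fun i => if i < N then w i else v `|i - N|%N.

Lemma splice_TMC w N v : TMC A w -> v 0%N = w N ->
  (forall t, A (v t) (v t.+1) = 1) -> TMC A (splice w N v).
Proof.
move=> Hw v0 Hv i; rewrite /splice.
have [iN|Ni] := ltP i N.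
  have [i1N|Ni1] := ltP (i + 1) N; first exact: Hw.
  have e : i + 1 = N by lia.
  by rewrite -e subrr /= v0 -e; exact: Hw.
have -> : (i + 1 < N) = false by apply/negbTE; rewrite -leNgt (le_trans Ni) // lerDl.
have -> : `|(i + 1 - N)%R|%N = (`|(i - N)%R|%N).+1 by lia.
exact: Hv.
Qed.

Lemma TMC_branch (w : Seqs m) (N : int) : TMC A w -> exists w' : Seqs m,
  [/\ TMC A w', (forall i, i <= N -> w' i = w i) &
      exists K : nat, w' (N + K%:Z) != w (N + K%:Z)].
Proof.
move=> Hw; have [K [_ HK]] := A_prim.
pose j : 'I_(m.+2) := if w (N + K%:Z) == ord0 then ord_max else ord0.
have jn : j != w (N + K%:Z).
  rewrite /j; case E: (w (N + K%:Z) == ord0); last by rewrite eq_sym E.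
  by move/eqP: E => ->; apply/eqP => /(congr1 val).
have [p [p0 pK pt]] := mx_power_gt0_path (HK (w N) j).
pose v t := if (t <= K)%N then p t else iter (t - K) successor j.
exists (splice w N v); split.
- apply: splice_TMC => // t; rewrite /v; case: (ltngtP t K) => tK.
  + exact: pt.
  + by rewrite subSn ?(ltnW tK) //=; exact: successorP.
  + by rewrite tK subSnn /= pK; exact: successorP.
- move=> i iN; rewrite /splice; case: ltP => // Ni.
  have -> : i = N by apply/eqP; rewrite eq_le iN Ni.
  by rewrite subrr /v /= p0.
- exists K; rewrite /splice.
  have -> : (N + K%:Z < N) = false by apply/negbTE; rewrite -leNgt lerDl.
  have -> : `|(N + K%:Z - N)%R|%N = K by lia.
  by rewrite /v leqnn pK.
Qed.

End admissible_paths.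

Lemma adde_le_half (R : realFieldType) (x y : \bar R) (d : R) :
  (0 <= x)%E -> (0 <= y)%E -> (x + y <= d%:E)%E ->
  (x <= (d / 2)%:E)%E \/ (y <= (d / 2)%:E)%E.
Proof.
case: x => [r1| |] //; case: y => [r2| |] // _ _; rewrite !lee_fin => h.
by have [|] := leP r1 (d / 2); [left | right; lra].
Qed.

Section cylinder_measure.
Variables (R : realType) (m : nat) (A : 'M[int]_(m.+2)).
Variable mu : {measure set (Seqs m) -> \bar R}.

Lemma measure_cylinder_le (z : Seqs m) (L L' : nat) : (L <= L')%N ->
  (mu (cylinder A 0 (L'%:Z - 1) z) <= mu (cylinder A 0 (L%:Z - 1) z))%E.
Proof.
move=> LL; apply: le_measure; rewrite ?inE; try exact: cylinder_measurable.
by apply: cylinder_subset; lia.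
Qed.

Hypothesis mu_sshift :
  forall B : set (Seqs m), measurable B -> mu (@sshift m @^-1` B) = mu B.

Lemma measure_cylinder_translate1 a b w :
  mu (cylinder A (a + 1) (b + 1) (fun j => w (j - 1))) = mu (cylinder A a b w).
Proof.
rewrite -(mu_sshift (cylinder_measurable A a b w)); congr (mu _).
apply/seteqP; split => x /=.
  by move=> H; apply/(cylinder_translate A a b w x 1).
by move/(cylinder_translate A a b w x 1).
Qed.

Lemma measure_cylinder_translate (n : nat) a b w :
  mu (cylinder A (a + n%:Z) (b + n%:Z) (fun j => w (j - n%:Z))) =
  mu (cylinder A a b w).
Proof.
elim: n => [|n IH].
  by rewrite !addr0; congr (mu (cylinder _ _ _ _)); apply/funext => j; rewrite subr0.
rewrite -IH -(measure_cylinder_translate1 (a + n%:Z)) -[_.+1]addn1 PoszD.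
congr (mu (cylinder _ _ _ _)); rewrite ?addrA //.
by apply/funext => j; rewrite opprD addrA addrAC.
Qed.

Lemma measure_cylinder_origin a b w :
  mu (cylinder A a b w) = mu (cylinder A 0 (b - a) (fun j => w (j + a))).
Proof.
case: a => n.
  rewrite -[RHS](measure_cylinder_translate n) add0r subrK.
  by congr (mu (cylinder _ _ _ _)); apply/funext => j; rewrite subrK.
by rewrite -[LHS](measure_cylinder_translate n.+1) NegzE addNr.
Qed.

Hypotheses (A01 : zero_one A) (A_prim : primitive_mx A).

Lemma cylinder_halve (z : Seqs m) (L : nat) (d : R) : TMC A z -> (0 < L)%N ->
  (mu (cylinder A 0 (L%:Z - 1) z) <= d%:E)%E ->
  exists (z' : Seqs m) (L' : nat), [/\ TMC A z', (0 < L')%N &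
    (mu (cylinder A 0 (L'%:Z - 1) z') <= (d / 2)%:E)%E].
Proof.
move=> Hz L0 Hd.
have [w' [Hw' Hagree [K HK]]] := TMC_branch A01 A_prim (L%:Z - 1) Hz.
pose C1 := cylinder A 0 ((L + K)%N%:Z - 1) z.
pose C2 := cylinder A 0 ((L + K)%N%:Z - 1) w'.
have C12 : C1 `&` C2 = set0.
  apply/seteqP; split => // x [[_ H1] [_ H2]].
  have hK : 0 <= L%:Z - 1 + K%:Z <= (L + K)%N%:Z - 1 by apply/andP; split; lia.
  by move: HK; rewrite -(H1 _ hK) -(H2 _ hK) eqxx.
have C12_sub : C1 `|` C2 `<=` cylinder A 0 (L%:Z - 1) z.
  move=> x [|[Hx1 Hx2]]; first by apply: cylinder_subset; lia.
  by split => // i Hi; rewrite Hx2 ?Hagree //; lia.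
have : (mu C1 + mu C2 <= d%:E)%E.
  rewrite -measureU ?C12 //; try exact: cylinder_measurable.
  apply: le_trans Hd; apply: le_measure C12_sub; rewrite inE.
    by apply: measurableU; exact: cylinder_measurable.
  exact: cylinder_measurable.
have LK : (0 < L + K)%N by rewrite addn_gt0 L0.
by move/adde_le_half => /(_ (measure_ge0 _ _) (measure_ge0 _ _)) [h|h];
  [exists z | exists w']; exists (L + K)%N.
Qed.

End cylinder_measure.

Section small_cylinders.
Variables (R : realType) (m : nat) (A : 'M[int]_(m.+2)).
Variable mu : probability (Seqs m) R.
Hypotheses (A01 : zero_one A) (A_prim : primitive_mx A).
Hypothesis mu_TMC : mu (TMC A) = 1%E.

Lemma TMC_neq0 : exists z, TMC A z.
Proof.
apply/set0P/eqP => H; move: mu_TMC; rewrite H measure0 => /eqP.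
by rewrite eq_sym onee_eq0.
Qed.

Lemma small_cylinder (j : nat) : exists (z : Seqs m) (L : nat),
  [/\ TMC A z, (0 < L)%N & (mu (cylinder A 0 (L%:Z - 1) z) <= ((2 ^ j)%:R^-1)%:E)%E].
Proof.
elim: j => [|j [z [L [Hz L0 Hd]]]].
  have [z Hz] := TMC_neq0.
  exists z, 1%N; split => //; rewrite expn0 invr1.
  by apply: probability_le1; exact: cylinder_measurable.
have [z' [L' [H1 H2]]] := cylinder_halve A01 A_prim Hz L0 Hd.
by exists z', L'; split => //; rewrite expnS natrM invfM mulrC.
Qed.

End small_cylinders.

Definition period (k : nat) := (2 ^ k.+2)%N.

Lemma period_gt0 k : (0 < period k)%N.
Proof. by rewrite expn_gt0. Qed.

Lemma gibbs_cylinder_gt0 (R : realType) (m : nat) (A : 'M[int]_(m.+2))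
    (phi : Seqs m -> R) (mu : probability (Seqs m) R) (z : Seqs m) (L : nat) :
  gibbs_measure A phi mu -> TMC A z -> (0 < L)%N ->
  (0 < mu (cylinder A 0 (L%:Z - 1) z))%E.
Proof.
move=> [_ _ [c1 [c2 [P [c10 [_ Hg]]]]]] Hz L0.
have /andP[+ _] := Hg z L Hz L0; apply: lt_le_trans.
by rewrite lte_fin mulr_gt0 // expR_gt0.
Qed.

Section good_cylinders.
Variables (R : realType) (m : nat) (A : 'M[int]_(m.+2)).
Variables (mu : probability (Seqs m) R) (eps : R).
Hypotheses (A01 : zero_one A) (A_prim : primitive_mx A).
Hypothesis mu_TMC : mu (TMC A) = 1%E.
Hypothesis mu_cylinder_gt0 : forall z (L : nat), TMC A z -> (0 < L)%N ->
  (0 < mu (cylinder A 0 (L%:Z - 1) z))%E.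
Hypothesis eps_gt0 : 0 < eps.

Lemma good_cylinder (k : nat) : exists (z : Seqs m) (L : nat) (q : R),
  [/\ (0 < L)%N, ~~ odd L, 2 * (period k)%:R <= eps * L%:R,
      mu (cylinder A 0 (L%:Z - 1) z) = q%:E & 0 < q <= (period k)%:R^-1].
Proof.
have [z [L1 [Hz L1_gt0 Hsmall]]] := small_cylinder A01 A_prim mu_TMC k.+2.
pose M := (Num.truncn (2 * (period k)%:R / eps)).+1.
pose L := (2 * (L1 + M))%N.
have L_gt0 : (0 < L)%N by rewrite muln_gt0 addn_gt0 L1_gt0.
have L1L : (L1 <= L)%N by lia.
have : (mu (cylinder A 0 (L%:Z - 1) z) <= ((period k)%:R^-1)%:E)%E.
  exact: le_trans (measure_cylinder_le A mu z L1L) Hsmall.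
have := mu_cylinder_gt0 Hz L_gt0.
case mu_L: (mu (cylinder A 0 (L%:Z - 1) z)) => [q| |] //.
rewrite lte_fin lee_fin => q_gt0 q_le.
exists z, L, q; split => //.
- by rewrite oddM.
- have M_gt : 2 * (period k)%:R / eps < M%:R by apply: truncnS_gt.
  have ML : (M%:R : R) <= L%:R by rewrite ler_nat; lia.
  by rewrite -ler_pdivrMl // mulrC (le_trans (ltW M_gt)).
- by rewrite q_gt0 q_le.
Qed.

Lemma good_cylinder_family : exists (z : nat -> Seqs m) (L : nat -> nat) (q : nat -> R),
  forall k, [/\ (0 < L k)%N, ~~ odd (L k), 2 * (period k)%:R <= eps * (L k)%:R,
    mu (cylinder A 0 ((L k)%:Z - 1) (z k)) = (q k)%:E & 0 < q k <= (period k)%:R^-1].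
Proof.
have [z /choice[L /choice[q Hq]]] := choice good_cylinder.
by exists z, L, q.
Qed.

End good_cylinders.

Section blocks.
Variable len : nat -> nat.
Hypothesis len_gt0 : forall k, (0 < len k)%N.

Fixpoint block_start K := if K is K'.+1 then (block_start K' + len K')%N else 0%N.

Fixpoint block_of n := if n is n'.+1 then
  (if n'.+1 == block_start (block_of n').+1 then (block_of n').+1 else block_of n')
  else 0%N.

Lemma block_start_homo : {homo block_start : K K' / (K <= K')%N}.
Proof.
apply: (homo_leq (r := fun a b => (a <= b)%N)) => [//|y x z|K /=].
  exact: leq_trans.
exact: leq_addr.
Qed.

Lemma block_ofP n : (block_start (block_of n) <= n < block_start (block_of n).+1)%N.
Proof.
elim: n => [|n IH] /=; first by rewrite add0n len_gt0.
move/andP: IH => [h1 h2]; case: eqP => [e|ne] /=.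
  by have := len_gt0 (block_of n).+1; lia.
by move: h2 ne => /=; lia.
Qed.

Lemma block_of_eq n K : (block_start K <= n < block_start K.+1)%N -> block_of n = K.
Proof.
move=> /andP[h1 h2]; have /andP[h3 h4] := block_ofP n.
have [lt|gt|//] := ltngtP (block_of n) K.
  by have := block_start_homo lt; lia.
by have := block_start_homo gt; lia.
Qed.

End blocks.

Section sparse_windows.
Variables (R : realType) (m : nat) (A : 'M[int]_(m.+2)).
Variable mu : {measure set (Seqs m) -> \bar R}.
Hypothesis mu_sshift :
  forall B : set (Seqs m), measurable B -> mu (@sshift m @^-1` B) = mu B.
Variables (z : nat -> Seqs m) (L : nat -> nat) (q : nat -> R) (off : nat -> int).
Hypothesis L_gt0 : forall k, (0 < L k)%N.
Hypothesis mu_Z : forall k, mu (cylinder A 0 ((L k)%:Z - 1) (z k)) = (q k)%:E.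
Hypothesis q_gt0 : forall k, 0 < q k.
Hypothesis q_le : forall k, q k <= (period k)%:R^-1.

Definition reps k := (Num.truncn ((period k)%:R * q k)^-1).+1.
Definition block_len k := (reps k * period k)%N.

Lemma block_len_gt0 k : (0 < block_len k)%N.
Proof. by rewrite muln_gt0 period_gt0. Qed.

Local Notation start := (block_start block_len).
Local Notation blk := (block_of block_len).

Definition rep_index n := ((n - start (blk n)) %/ period (blk n))%N.
Definition phase n := ((n - start (blk n)) %% period (blk n))%N.

Definition win_lo n : int := off (blk n) - (phase n)%:Z.
Definition win_hi n : int := win_lo n + (L (blk n))%:Z - 1.
Definition win_word n : Seqs m := fun i => z (blk n) (i - win_lo n).
Definition window n := cylinder A (win_lo n) (win_hi n) (win_word n).

Definition anchor k b : int := off k + (start k + b * period k)%N%:Z.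
Definition anchored k b :=
  cylinder A (anchor k b) (anchor k b + (L k)%:Z - 1) (fun j => z k (j - anchor k b)).
Definition block_event k := \bigcup_(b in `I_(reps k)) anchored k b.

Lemma rep_index_lt n : (rep_index n < reps (blk n))%N.
Proof.
rewrite ltn_divLR ?period_gt0 //.
by have := block_ofP block_len_gt0 n; rewrite /block_len /=; lia.
Qed.

Lemma index_decomposition n :
  n = (start (blk n) + rep_index n * period (blk n) + phase n)%N.
Proof.
rewrite -addnA -divn_eq subnKC //.
by have /andP[] := block_ofP block_len_gt0 n.
Qed.

Lemma win_lo_addn n : win_lo n + n%:Z = anchor (blk n) (rep_index n).
Proof.
have -> : n%:Z = (start (blk n) + rep_index n * period (blk n))%N%:Z + (phase n)%:Z.
  by rewrite -PoszD -index_decomposition.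
by rewrite /anchor /win_lo; lia.
Qed.

Lemma window_iter_sshift n x :
  window n (iter n (@sshift m) x) <-> anchored (blk n) (rep_index n) x.
Proof.
rewrite /window cylinder_iter_sshift /anchored -win_lo_addn.
have -> : win_hi n + n%:Z = win_lo n + n%:Z + (L (blk n))%:Z - 1 by rewrite /win_hi; lia.
have -> : (fun j => win_word n (j - n%:Z)) = (fun j => z (blk n) (j - (win_lo n + n%:Z))).
  by apply: funext => j; rewrite /win_word; congr (z _ _); lia.
done.
Qed.

Lemma measure_window n : mu (window n) = (q (blk n))%:E.
Proof.
rewrite /window (measure_cylinder_origin A mu_sshift) -mu_Z.
congr (mu (cylinder _ _ _ _)); first by rewrite /win_hi; lia.
by apply: funext => j; rewrite /win_word addrK.
Qed.

Lemma measure_anchored k b : mu (anchored k b) = (q k)%:E.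
Proof.
rewrite /anchored (measure_cylinder_origin A mu_sshift) -mu_Z.
congr (mu (cylinder _ _ _ _)); first by lia.
by apply: funext => j; rewrite addrK.
Qed.

Lemma block_event_measurable k : measurable (block_event k).
Proof. by apply: bigcup_measurable => b _; exact: cylinder_measurable. Qed.

Lemma reps_le k : (reps k)%:R <= ((period k)%:R * q k)^-1 + 1.
Proof. by rewrite /reps -addn1 natrD lerD2r truncn_le invr_ge0 mulr_ge0 // ltW. Qed.

Lemma block_len_q_ge1 k : 1 <= (block_len k)%:R * q k.
Proof.
have pq_gt0 : 0 < (period k)%:R * q k by rewrite mulr_gt0 // ltr0n period_gt0.
rewrite natrM -mulrA -ler_pdivrMr // div1r.
exact/ltW/truncnS_gt.
Qed.

Lemma measure_block_event k : (mu (block_event k) <= (1 / (2 ^ k.+1)%:R)%:E)%E.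
Proof.
rewrite /block_event bigcup_mkord.
apply: le_trans (Boole_inequality mu (A := anchored k) _) _ => [b _|].
  exact: cylinder_measurable.
rewrite (eq_bigr (fun=> (q k)%:E)) => [|b _]; last exact: measure_anchored.
rewrite sumEFin sumr_const card_ord lee_fin -[X in X <= _]mulr_natl.
apply: le_trans (ler_wpM2r (ltW (q_gt0 k)) (reps_le k)) _.
have p_gt0 : 0 < (period k)%:R :> R by rewrite ltr0n period_gt0.
rewrite mulrDl invfM -mulrA mulVf ?gt_eqF // mulr1 !mul1r.
by have := q_le k; rewrite /period expnS natrM invfM; lra.
Qed.

Lemma ae_finitely_many_windows :
  {ae mu, forall x, finite_set [set n : nat | window n (iter n (@sshift m) x)]}.
Proof.
exists (lim_sup_set block_event); split.
- apply: bigcapT_measurable => K; apply: bigcup_measurable => k _.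
  exact: block_event_measurable.
- apply: lim_sup_set_cvg0; first exact: block_event_measurable.
  apply: (@le_lt_trans _ _ 1%E); last exact: ltey.
  apply: le_trans (epsilon_trick0 xpredT ler01).
  by apply: lee_nneseries => // k _; exact: measure_block_event.
move=> x /= x_inf K _; apply: contrapT => HK; apply: x_inf.
apply: (sub_finite_set (B := `I_(start K))); last exact: finite_II.
move=> n /= /window_iter_sshift hit.
have blkK : (blk n < K)%N.
  by rewrite ltnNge; apply/negP => Kk; apply: HK; exists (blk n) => //;
    exists (rep_index n) => //=; exact: rep_index_lt.
have /andP[_ h] := block_ofP block_len_gt0 n.
exact: leq_trans h (block_start_homo _ blkK).
Qed.

Lemma window_partial_sum_ge K :
  ((K%:R)%:E <= \sum_(0 <= n < start K) mu (window n))%E.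
Proof.
elim: K => [|K IH]; first by rewrite big_geq.
rewrite (@big_cat_nat _ _ _ (start K)) //= ?leq_addr // -addn1 natrD EFinD.
apply: leeD => //.
rewrite (@eq_big_nat _ _ _ _ _ _ (fun=> (q K)%:E)) => [|n Hn]; last first.
  by rewrite measure_window (block_of_eq block_len_gt0 Hn).
rewrite sumEFin sumr_const_nat lee_fin addKn -[X in _ <= X]mulr_natl.
exact: block_len_q_ge1.
Qed.

Lemma window_sum_infty : (\sum_(0 <= n <oo) mu (window n) = +oo)%E.
Proof.
have sum_ge K : ((K%:R)%:E <= \sum_(0 <= n <oo) mu (window n))%E.
  apply: le_trans (window_partial_sum_ge K) _.
  by apply: nneseries_lim_ge => n _ _; exact: measure_ge0.
move: sum_ge; case: (\sum_(0 <= n <oo) _)%E => [r| |] // sum_ge.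
  by have := sum_ge (Num.truncn r).+1; rewrite lee_fin leNgt truncnS_gt.
by have := sum_ge 0%N.
Qed.

Lemma sparse_windows : exists (a b : nat -> int) (w : nat -> Seqs m),
  [/\ (forall n, a n <= b n),
      (\sum_(0 <= n <oo) mu (cylinder A (a n) (b n) (w n)) = +oo)%E,
      (forall n, exists k (t : nat),
         [/\ (t < period k)%N, a n = off k - t%:Z & b n = a n + (L k)%:Z - 1]) &
      {ae mu, forall x, finite_set
        [set n : nat | cylinder A (a n) (b n) (w n) (iter n (@sshift m) x)]}].
Proof.
exists win_lo, win_hi, win_word; split.
- by move=> n; rewrite /win_hi; have := L_gt0 (blk n); lia.
- exact: window_sum_infty.
- by move=> n; exists (blk n), (phase n); rewrite ltn_pmod ?period_gt0.
- exact: ae_finitely_many_windows.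
Qed.

End sparse_windows.

Lemma centred_window_bound (R : realFieldType) (eps : R) (L s t : nat) (a b : int) :
  ~~ odd L -> (t < s)%N -> 2 * s%:R <= eps * L%:R ->
  a = - (L./2)%:Z - t%:Z -> b = a + L%:Z - 1 ->
  - (eps * (b - a + 1)%:~R / 2) <= ((a + b)%:~R : R) / 2 <= eps * (b - a + 1)%:~R / 2.
Proof.
move=> L_even ts sL -> ->.
have L2 := odd_double_half L; rewrite (negbTE L_even) add0n -mul2n in L2.
have -> : - (L./2)%:Z - t%:Z + L%:Z - 1 - (- (L./2)%:Z - t%:Z) + 1 = L%:Z by lia.
have -> : - (L./2)%:Z - t%:Z + (- (L./2)%:Z - t%:Z + L%:Z - 1) = - (2 * t + 1)%N%:Z.
  by move: L2; set h := L./2; lia.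
rewrite intrN -!pmulrn natrD natrM.
have t_ge0 : (0 : R) <= t%:R by [].
have t1s : (t%:R + 1 : R) <= s%:R by rewrite natr1 ler_nat.
lra.
Qed.

Lemma left_window_bound (R : realFieldType) (eps : R) (L s t : nat) (a b : int) :
  (t < s)%N -> 2 * s%:R <= eps * L%:R ->
  a = s%:Z - t%:Z -> b = a + L%:Z - 1 ->
  0 <= (a%:~R : R) <= eps * (b - a + 1)%:~R.
Proof.
move=> ts sL -> ->.
have -> : s%:Z - t%:Z + L%:Z - 1 - (s%:Z - t%:Z) + 1 = L%:Z by lia.
have -> : s%:Z - t%:Z = (s - t)%N%:Z by lia.
rewrite -!pmulrn.
have st_ge0 : (0 : R) <= (s - t)%N%:R by [].
have st_le : ((s - t)%N%:R : R) <= s%:R by rewrite ler_nat leq_subr.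
lra.
Qed.

Unset Implicit Arguments. Set Strict Implicit.

Theorem theorem2p3 (R : realType) (m : nat) (A : 'M[int]_(m.+2))
  (phi : Seqs m -> R) (mu : probability (Seqs m) R) (eps : R) :
  zero_one A -> primitive_mx A -> holder A phi -> gibbs_measure A phi mu ->
  0 < eps ->
  (exists (a b : nat -> int) (w : nat -> Seqs m),
     (forall n, a n <= b n) /\
     (\sum_(0 <= n <oo) mu (cylinder A (a n) (b n) (w n)) = +oo)%E /\
     (forall n, - (eps * (b n - a n + 1)%:~R / 2) <= ((a n + b n)%:~R : R) / 2
                <= eps * (b n - a n + 1)%:~R / 2) /\
     {ae mu, forall x, finite_set
        [set n : nat | cylinder A (a n) (b n) (w n) (iter n (@sshift m) x)]})
  /\
  (exists (a b : nat -> int) (w : nat -> Seqs m),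
     (forall n, a n <= b n) /\
     (\sum_(0 <= n <oo) mu (cylinder A (a n) (b n) (w n)) = +oo)%E /\
     (forall n, 0 <= ((a n)%:~R : R) <= eps * (b n - a n + 1)%:~R) /\
     {ae mu, forall x, finite_set
        [set n : nat | cylinder A (a n) (b n) (w n) (iter n (@sshift m) x)]}).
Proof.
move=> A01 A_prim _ gibbs eps_gt0.
have [mu_TMC mu_sshift _] := gibbs.
have [z [L [q Z]]] := good_cylinder_family A01 A_prim mu_TMC
  (fun z L => gibbs_cylinder_gt0 gibbs) eps_gt0.
have L_gt0 k : (0 < L k)%N by have [] := Z k.
have mu_Z k : mu (cylinder A 0 ((L k)%:Z - 1) (z k)) = (q k)%:E by have [] := Z k.
have q_gt0 k : 0 < q k by have [_ _ _ _ /andP[]] := Z k.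
have q_le k : q k <= (period k)%:R^-1 by have [_ _ _ _ /andP[]] := Z k.
split.
- have [a [b [w [ab sum_infty win ae]]]] :=
    sparse_windows mu_sshift (fun k => - ((L k)./2)%:Z) L_gt0 mu_Z q_gt0 q_le.
  exists a, b, w; do 3!split => //.
  move=> n; have [k [t [ts -> ->]]] := win n; have [_ L_even sL _ _] := Z k.
  exact: centred_window_bound L_even ts sL _ _.
- have [a [b [w [ab sum_infty win ae]]]] :=
    sparse_windows mu_sshift (fun k => (period k)%:Z) L_gt0 mu_Z q_gt0 q_le.
  exists a, b, w; do 3!split => //.
  move=> n; have [k [t [ts -> ->]]] := win n; have [_ _ sL _ _] := Z k.
  exact: left_window_bound ts sL _ _.
Qed.
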